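(* Let $X$ be a finite discrete space with at least two elements, $\Gamma$ a nonempty countable set, $\varphi:\Gamma\to\Gamma$ any map. Then $(X^\Gamma,\sigma_\varphi)$ is dense distributional chaotic if and only if $\varphi$ has no periodic point.
   Context: $X^\Gamma$ has the product topology and a fixed compatible metric $d$; $\sigma_\varphi((x_\alpha)_{\alpha\in\Gamma})=(x_{\varphi(\alpha)})_{\alpha\in\Gamma}$. For $f=\sigma_\varphi$, $x,y\in X^\Gamma$, $t>0$: $\xi(x,y,t,n)=\#\{i\in\{0,\dots,n-1\}:d(f^i(x),f^i(y))<t\}$, $F_{xy}(t)=\liminf_n \xi(x,y,t,n)/n$, $F^*_{xy}(t)=\limsup_n\xi(x,y,t,n)/n$. The system is dense distributional chaotic if there exist a dense uncountable set $A\subseteq X^\Gamma$ and $\varepsilon>0$ such that for all distinct $x,y\in A$: $F^*_{xy}(s)=1$ for every $s>0$ and $F_{xy}(\varepsilon)=0$. *)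

From HB Require Import structures.
From mathcomp Require Import all_boot all_order all_algebra.
From mathcomp Require Import all_classical all_reals all_analysis.
Set Implicit Arguments. Unset Strict Implicit. Unset Printing Implicit Defensive.
Import Order.TTheory GRing.Theory Num.Theory.
Local Open Scope classical_set_scope.
Local Open Scope ring_scope.

Definition is_metric (R : realType) (T : Type) (d : T -> T -> R) : Prop :=
  [/\ (forall x y, 0 <= d x y),
      (forall x y, d x y = 0 <-> x = y),
      (forall x y, d x y = d y x) &
      (forall x y z, d x z <= d x y + d y z)].

Definition metric_compatible (R : realType) (T : topologicalType)
    (d : T -> T -> R) : Prop :=
  forall U : set T, open U <->
    (forall x, U x -> exists2 e : R, 0 < e & [set y | d x y < e] `<=` U).

Definition sigma_phi (G X : Type) (phi : G -> G) (x : G -> X) : G -> X :=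
  fun a => x (phi a).

Definition xi (R : realType) (T : Type) (d : T -> T -> R) (f : T -> T)
    (x y : T) (t : R) (n : nat) : nat :=
  #|[set i : 'I_n | d (iter i f x) (iter i f y) < t]|.

Definition F_low (R : realType) (T : Type) (d : T -> T -> R) (f : T -> T)
    (x y : T) (t : R) : \bar R :=
  limn_einf (fun n => ((xi d f x y t n)%:R / n%:R)%:E).

Definition F_up (R : realType) (T : Type) (d : T -> T -> R) (f : T -> T)
    (x y : T) (t : R) : \bar R :=
  limn_esup (fun n => ((xi d f x y t n)%:R / n%:R)%:E).

Definition dense_distributional_chaotic (R : realType) (T : topologicalType)
    (d : T -> T -> R) (f : T -> T) : Prop :=
  exists A : set T,
    [/\ dense A, ~ countable A &
      exists2 eps : R, 0 < eps &
        forall x y, A x -> A y -> x <> y ->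
          (forall s : R, 0 < s -> F_up d f x y s = 1%:E) /\
          F_low d f x y eps = 0%:E].

Definition has_periodic_point (G : Type) (phi : G -> G) : Prop :=
  exists a : G, exists n : nat, (0 < n)%N /\ iter n phi a = a.

From HB Require Import structures.
From mathcomp Require Import all_boot all_order all_algebra.
From mathcomp Require Import all_classical all_reals all_analysis.
From mathcomp Require Import lra zify.
Set Implicit Arguments. Unset Strict Implicit. Unset Printing Implicit Defensive.
Import Order.TTheory GRing.Theory Num.Theory.
Local Open Scope classical_set_scope.

(* If a is periodic, density yields x, y in the scrambled set with x a <> y a.
   The orbit of a keeps returning to a, so at every time some coordinate of the
   finite orbit of a separates the iterates of x and y; compactness of X^G makes
   the compatible metric bound their distance below uniformly, and F*_xy(s) = 0
   for small s.

   Conversely, without periodic points the forward orbit of a point a0 is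
   injective.  Cut time into the blocks [2^2^j, 2^2^(j+1)), each dominating
   everything before it, and schedule every block either to agree or to test
   some bit k, each schedule occurring infinitely often.  A bit sequence b
   gives the word that is x2 on the blocks testing a bit k with b k false and
   x1 elsewhere; the associated point writes this word along the orbit of a0
   (and on every point merging into it) and is x1 off it.  During most of a late
   agreement block two such points agree on any finite set of coordinates, so
   F* = 1; during most of a block testing a bit where their sequences differ
   they differ at a0, so F = 0 at a fixed scale.  Arbitrary finite prefixes give
   density and the bit sequences give uncountably many points. *)

Definition agree_below (G : countType) (X : Type) (n : nat) (u v : G -> X) :=
  forall g, pickle g < n -> u g = v g.

Lemma agree_below_trans (G : countType) (X : Type) n (u v w : G -> X) :
  agree_below n u v -> agree_below n v w -> agree_below n u w.
Proof. by move=> uv vw g gn; rewrite uv ?vw. Qed.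

Lemma near_forall_pickle_lt (G : countType) (T : Type) (F : set_system T)
    {FF : Filter F} (P : G -> T -> Prop) n :
  (forall g, \forall t \near F, P g t) ->
  \forall t \near F, forall g, pickle g < n -> P g t.
Proof.
move=> nearP; elim: n => [|n IH]; first by apply: nearW => t g.
case En: (@unpickle G n) => [a|]; last first.
  apply: filterS IH => t Pt g; rewrite ltnS leq_eqVlt => /orP[/eqP gn|]; last exact: Pt.
  by move: En; rewrite -gn pickleK.
apply: filterS (filterI IH (nearP a)) => t [Pt Pat] g.
rewrite ltnS leq_eqVlt => /orP[/eqP gn|]; last exact: Pt.
by move: En; rewrite -gn pickleK => -[->].
Qed.

Lemma injective_nat_near_ge (f : nat -> nat) L :
  injective f -> \forall n \near \oo, L <= f n.
Proof.
move=> f_inj; elim: L => [|L [N _ LN]]; first by exists 0.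
have [[n0 fn0]|noL] := pselect (exists n0, f n0 = L); last first.
  exists N => // n /LN; rewrite leq_eqVlt => /orP[/eqP Lfn|//].
  by case: noL; exists n.
exists (maxn N n0.+1) => // n /=; rewrite geq_max => /andP[/LN Nn n0n].
rewrite ltn_neqAle Nn andbT; apply/eqP => Lfn.
by move: n0n; rewrite (f_inj n0 n) ?ltnn // fn0.
Qed.

Lemma not_injective_to_nat (h : (nat -> bool) -> nat) : ~ injective h.
Proof.
move=> h_inj.
pose b n := if pselect (exists b', h b' = n) is left e then ~~ projT1 (cid e) n else false.
have : b (h b) = ~~ b (h b).
  rewrite {1}/b; case: pselect => [e|]; last by case; exists b.
  by case: cid => b' /= /h_inj ->.
by case: (b (h b)).
Qed.

Lemma iter_sigma_phi (G X : Type) (phi : G -> G) i (x : G -> X) :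
  iter i (sigma_phi phi) x = x \o iter i phi.
Proof.
elim: i x => [|i IH] x //=; rewrite IH; apply/funext => a.
by rewrite /sigma_phi /= -iterSr.
Qed.

Lemma iter_periodic_return (T : Type) (f : T -> T) a p : 0 < p -> iter p f a = a ->
  forall i, exists2 r, r < p & iter (i + r) f a = a.
Proof.
move=> p0 pa; elim=> [|i [[|r] rp ira]]; first by exists 0.
  exists p.-1; first by rewrite prednK.
  by rewrite addSnnS prednK // iterD pa; rewrite addn0 in ira.
by exists r; [exact: ltnW | rewrite addSnnS].
Qed.

Definition long_runs (P : nat -> Prop) := forall K N, exists n a,
  [/\ N <= n, a * K.+1 <= n & forall i, a <= i < n -> P i].

Lemma long_runsW (P Q : nat -> Prop) :
  (forall i, P i -> Q i) -> long_runs P -> long_runs Q.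
Proof.
move=> PQ runs K N; have [n [a [Nn aK aP]]] := runs K N.
by exists n, a; split => // i /aP/PQ.
Qed.

Definition block_start j := 2 ^ (2 ^ j).
Definition block i := trunc_log 2 (trunc_log 2 i).

Lemma block_startS j : block_start j.+1 = block_start j * block_start j.
Proof. by rewrite /block_start expnS mulnC expnM expnS expn1. Qed.

Lemma block_start_gt j : j < block_start j.
Proof.
by rewrite /block_start (ltn_trans (ltn_expl j (ltnSn 1))) // ltn_exp2l // ltn_expl.
Qed.

Lemma blockE j i : block_start j <= i < block_start j.+1 -> block i = j.
Proof.
move=> /andP[lo hi]; have i0 : 0 < i by apply: leq_trans lo; rewrite expn_gt0.
apply: trunc_log_eq => //; rewrite trunc_log_max //=.
by rewrite -(ltn_exp2l _ _ (ltnSn 1)) (leq_ltn_trans (trunc_logP (leqnn 2) i0)).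
Qed.

Lemma window_long_runs (J : nat -> Prop) M : (forall Z, exists2 j, Z <= j & J j) ->
  long_runs (fun i => M <= i /\
    exists2 j, J j & forall k, i - M <= k <= i + M -> block k = j).
Proof.
move=> J_inf K N; pose Z := N + (2 * M + 1) * K.+1 + 1.
have [j Zj Jj] := J_inf Z; set t := block_start j.
have Zt : Z < t := leq_ltn_trans Zj (block_start_gt j).
have tt : Z.+1 * t <= t * t by rewrite leq_mul2r Zt orbT.
exists (block_start j.+1 - M), (t + M); rewrite block_startS -/t.
split; [nia | nia | move=> i iM; split; first lia].
by exists j => // k kM; apply: blockE; rewrite block_startS -/t; lia.
Qed.

(* None schedules an agreement block, Some k a block testing bit k. *)
Definition schedule (j : nat) : option nat :=
  if @unpickle (option nat * nat)%type j is Some (v, _) then v else None.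

Lemma schedule_inf v Z : exists2 j, Z <= j & schedule j = v.
Proof.
have inj : injective (fun t : nat => pickle (v, t)).
  by move=> t t' /(pcan_inj pickleK) [].
have [N _ /(_ N (leqnn N)) ZN] := injective_nat_near_ge Z inj.
by exists (pickle (v, N)); rewrite // /schedule pickleK.
Qed.

Section ScrambledSet.
Variables (G : countType) (phi : G -> G).
Hypothesis aperiodic : ~ has_periodic_point phi.

Lemma iter_inj a : injective (fun n => iter n phi a).
Proof.
suff lt_neq p q : p < q -> iter p phi a <> iter q phi a.
  move=> p q E; case: (ltngtP p q) => // pq; first by case: (lt_neq _ _ pq E).
  by case: (lt_neq _ _ pq (esym E)).
move=> pq E; apply: aperiodic; exists (iter p phi a), (q - p).
by rewrite subn_gt0 -iterD subnK // ltnW.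
Qed.

Lemma pickle_iter_near_ge a L : \forall i \near \oo, L <= pickle (iter i phi a).
Proof. exact/injective_nat_near_ge/(inj_comp (pcan_inj pickleK))/iter_inj. Qed.

Variable a0 : G.

Definition orbit_offset g k := exists m, iter m phi g = iter (m + k) phi a0.

Lemma orbit_offset_uniq g k k' : orbit_offset g k -> orbit_offset g k' -> k = k'.
Proof.
move=> [m gk] [m' gk']; apply/(@addnI (m' + m))/(@iter_inj a0) => /=.
have -> : iter (m' + m + k) phi a0 = iter (m' + m) phi g.
  by rewrite -addnA iterD -gk -iterD.
by rewrite addnC iterD gk' -iterD addnA.
Qed.

Lemma orbit_offset_iter i : orbit_offset (iter i phi a0) i.
Proof. by exists 0. Qed.

Lemma orbit_offset_shift g k j : orbit_offset g k -> orbit_offset (iter j phi g) (k + j).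
Proof.
move=> [m gk]; exists m.
by rewrite -iterD addnC iterD gk -iterD; congr iter; lia.
Qed.

Variables (X : Type) (x1 x2 : X).
Hypothesis x12 : x1 <> x2.

Definition orbit_extend (w : nat -> X) g : X :=
  if pselect (exists k, orbit_offset g k) is left off then w (projT1 (cid off)) else x1.

Lemma orbit_extend_offset w g k : orbit_offset g k -> orbit_extend w g = w k.
Proof.
move=> gk; rewrite /orbit_extend; case: pselect => [off|[]]; last by exists k.
by case: cid => k' /= /orbit_offset_uniq/(_ gk) ->.
Qed.

Lemma orbit_extend_out w g : ~ (exists k, orbit_offset g k) -> orbit_extend w g = x1.
Proof. by rewrite /orbit_extend; case: pselect. Qed.

Lemma orbit_extend_near_quiet g : \forall M \near \oo, forall w i, M <= i ->
  (forall k, i - M <= k <= i + M -> w k = x1) -> orbit_extend w (iter i phi g) = x1.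
Proof.
have [[i0 [k0 off]]|none] := pselect (exists i0 k0, orbit_offset (iter i0 phi g) k0).
  exists (i0 + k0) => // M /= M_ge w i Mi quiet.
  have -> : iter i phi g = iter (i - i0) phi (iter i0 phi g).
    by rewrite -iterD subnK //; lia.
  by rewrite (orbit_extend_offset _ (orbit_offset_shift (i - i0) off)) quiet //; lia.
exists 0 => // M _ w i _ _; apply: orbit_extend_out => -[k off].
by apply: none; exists i, k.
Qed.

Definition word (b : nat -> bool) i : X :=
  if schedule (block i) is Some k then (if b k then x1 else x2) else x1.

Variable enc : X -> nat.
Hypothesis enc_inj : injective enc.

(* The prefix p.2 is also recorded in the odd bits: points differing only in
   their prefixes would otherwise agree at all late times. *)
Definition code (p : (nat -> bool) * seq X) k : bool :=
  if odd k then k./2 == pickle (map enc p.2) else p.1 k./2.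

Lemma code_inj : injective code.
Proof.
move=> [b l] [b' l'] bl_eq; congr pair.
  apply/funext => k; have := congr1 (fun c => c k.*2) bl_eq.
  by rewrite /code odd_double /= doubleK.
have := congr1 (fun c => c (pickle (map enc l)).*2.+1) bl_eq.
rewrite /code /= odd_double /= uphalf_double eqxx => /esym/eqP/(pcan_inj pickleK).
exact: inj_map.
Qed.

Definition scrambled_point (p : (nat -> bool) * seq X) g : X :=
  if pickle g < size p.2 then nth x1 p.2 (pickle g) else orbit_extend (word (code p)) g.

Lemma scrambled_point_prefix (u : G -> X) n : exists p, agree_below n u (scrambled_point p).
Proof.
exists (xpredT, map (fun k => if @unpickle G k is Some g then u g else x1) (iota 0 n)).
move=> g gn; rewrite /scrambled_point size_map size_iota gn (nth_map 0) ?size_iota //.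
by rewrite nth_iota // pickleK.
Qed.

Lemma scrambled_point_orbit p :
  \forall i \near \oo, scrambled_point p (iter i phi a0) = word (code p) i.
Proof.
apply: filterS (pickle_iter_near_ge a0 (size p.2)) => i large.
by rewrite /scrambled_point ltnNge large /= (orbit_extend_offset _ (orbit_offset_iter i)).
Qed.

Lemma scrambled_point_near_quiet p g : \forall M \near \oo, forall i, M <= i ->
  (forall k, i - M <= k <= i + M -> word (code p) k = x1) ->
  scrambled_point p (iter i phi g) = x1.
Proof.
have [L _ large] := pickle_iter_near_ge g (size p.2).
have L_le : \forall M \near \oo, L <= M by exists L.
apply: filterS (filterI L_le (orbit_extend_near_quiet g)) => M [LM quiet] i Mi win.
by rewrite /scrambled_point ltnNge large ?quiet //; exact: leq_trans Mi.
Qed.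

Lemma scrambled_point_agree_long_runs p p' n : long_runs (fun i =>
  agree_below n (scrambled_point p \o iter i phi) (scrambled_point p' \o iter i phi)).
Proof.
have [M _ /(_ M (leqnn M)) quiet] := near_forall_pickle_lt n
  (fun g => filterI (scrambled_point_near_quiet p g) (scrambled_point_near_quiet p' g)).
apply: long_runsW (window_long_runs M (schedule_inf None)) => i [Mi [j sj win]] g.
move=> /quiet[quiet_p quiet_p'] /=.
by rewrite quiet_p ?quiet_p' // => k /win bk; rewrite /word bk sj.
Qed.

Lemma scrambled_point_differ_long_runs p p' : p <> p' -> long_runs (fun i =>
  scrambled_point p (iter i phi a0) <> scrambled_point p' (iter i phi a0)).
Proof.
move=> pp'; have /existsNP[k code_k] : ~ forall k, code p k = code p' k.
  by move=> same; apply/pp'/code_inj/funext.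
have [N _ orbit_word] := filterI (scrambled_point_orbit p) (scrambled_point_orbit p').
apply: long_runsW (window_long_runs N (schedule_inf (Some k))) => i [Ni [j sj win]].
have [-> ->] := orbit_word i Ni.
rewrite /word (win i) ?sj; last lia.
by case: (code p k) (code p' k) code_k => [] [] // _ /esym.
Qed.

Lemma scrambled_point_inj : injective scrambled_point.
Proof.
move=> p p' eq_p; apply: contrapT => /scrambled_point_differ_long_runs/(_ 1 1).
by move=> [n [a [n1 a2n /(_ a)]]]; rewrite eq_p; apply => //; lia.
Qed.
End ScrambledSet.

Lemma card_ord_count (P : pred nat) n : #|[set i : 'I_n | P i]| = count P (iota 0 n).
Proof.
rewrite -sum1_card -sum1_count (eq_bigl (fun i : 'I_n => P i)) => [|i]; last first.
  by apply/idP/idP; rewrite in_setE.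
by rewrite -(big_mkord P (fun _ => 1)) /index_iota subn0.
Qed.

Lemma card_run_ge (P : pred nat) n a :
  (forall i, a <= i < n -> P i) -> n - a <= #|[set i : 'I_n | P i]|.
Proof.
move=> aP; rewrite card_ord_count.
have [an|na] := leqP a n; last by rewrite (eqP (ltnW na : n <= a)) ?subn_eq0.
have -> : iota 0 n = iota 0 a ++ iota a (n - a) by rewrite -iotaD subnKC.
rewrite count_cat (@eq_in_count _ P predT (iota a (n - a))) => [|i].
  by rewrite count_predT size_iota leq_addl.
by rewrite mem_iota subnKC // => /aP.
Qed.

Lemma card_run_le (P : pred nat) n a :
  (forall i, a <= i < n -> ~~ P i) -> #|[set i : 'I_n | P i]| <= a.
Proof.
move=> aNP; have := @card_run_ge (predC P) n a aNP; rewrite !card_ord_count.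
have := count_predC P (iota 0 n); rewrite size_iota; lia.
Qed.

Local Open Scope ring_scope.

Section Frequency.
Variable R : realType.

Definition freq (P : pred nat) n : R := #|[set i : 'I_n | P i]|%:R / n%:R.

Lemma freq_ge0 (P : pred nat) n : 0 <= freq P n.
Proof. by rewrite divr_ge0. Qed.

Lemma freq_le1 (P : pred nat) n : freq P n <= 1.
Proof.
case: n => [|n]; first by rewrite /freq invr0 mulr0.
rewrite ler_pdivrMr ?ltr0Sn // mul1r ler_nat.
by apply: card_run_le => i /andP[ni]; rewrite ltnNge ni.
Qed.

Lemma freq_run_ge (P : pred nat) n a K : (0 < n)%N -> (a * K.+1 <= n)%N ->
  (forall i, (a <= i < n)%N -> P i) -> 1 - K.+1%:R^-1 <= freq P n.
Proof.
move=> n0 aK /card_run_ge; rewrite -(ler_nat R) => card_ge.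
have an : (a <= n)%N by apply: leq_trans aK; rewrite leq_pmulr.
have a_le : a%:R <= n%:R / K.+1%:R :> R.
  by rewrite ler_pdivlMr ?ltr0n // -natrM ler_nat.
rewrite /freq ler_pdivlMr ?ltr0n // mulrBl mul1r (mulrC _^-1).
by apply: le_trans card_ge; rewrite natrB //; exact: lerB (lexx _) a_le.
Qed.

Lemma freq_run_le (P : pred nat) n a K : (0 < n)%N -> (a * K.+1 <= n)%N ->
  (forall i, (a <= i < n)%N -> ~~ P i) -> freq P n <= K.+1%:R^-1.
Proof.
move=> n0 aK /card_run_le; rewrite -(ler_nat R) => card_le.
rewrite /freq ler_pdivrMr ?ltr0n // (le_trans card_le) //.
by rewrite mulrC ler_pdivlMr ?ltr0n // -natrM ler_nat.
Qed.

Lemma limn_esup_freq (P : pred nat) :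
  long_runs P -> limn_esup (fun n => (freq P n)%:E) = 1%E.
Proof.
move=> runs; rewrite limn_esup_lim.
suff -> : esups (fun n => (freq P n)%:E) = cst 1%E by rewrite lim_cst.
apply/funext => N; apply/eqP; rewrite eq_le; apply/andP; split.
  by apply: ge_ereal_sup => _ [n _ <-]; rewrite lee_fin freq_le1.
apply/lee_subgt0Pr => e e0; have [K] := ltr_add_invr e0; rewrite add0r => Ke.
have [n [a [Nn aK aP]]] := runs K N.+1.
apply: le_ereal_sup_tmp; exists (freq P n)%:E; first by exists n => //; exact: ltnW.
rewrite lee_fin; apply: le_trans (freq_run_ge _ aK aP); last exact: leq_ltn_trans Nn.
exact: lerB (lexx _) (ltW Ke).
Qed.

Lemma limn_einf_freq (P : pred nat) :
  long_runs (fun i => ~~ P i) -> limn_einf (fun n => (freq P n)%:E) = 0%E.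
Proof.
move=> runs; rewrite limn_einf_lim.
suff -> : einfs (fun n => (freq P n)%:E) = cst 0%E by rewrite lim_cst.
apply/funext => N; apply/eqP; rewrite eq_le; apply/andP; split; last first.
  by apply: le_ereal_inf_tmp => _ [n _ <-]; rewrite lee_fin freq_ge0.
apply/lee_addgt0Pr => e e0; have [K] := ltr_add_invr e0; rewrite add0r => Ke.
have [n [a [Nn aK aP]]] := runs K N.+1.
apply: ge_ereal_inf; exists (freq P n)%:E; first by exists n => //; exact: ltnW.
rewrite add0e lee_fin; apply: le_trans (freq_run_le _ aK aP) _; last exact: ltW.
exact: leq_ltn_trans Nn.
Qed.

Lemma limn_esup_freq0 (P : pred nat) :
  (forall i, ~~ P i) -> limn_esup (fun n => (freq P n)%:E) = 0%E.
Proof.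
move=> NP; have -> : (fun n => (freq P n)%:E) = cst 0%E.
  apply/funext => n; have /eqP card0 : #|[set i : 'I_n | P i]| == 0%N.
    by rewrite -leqn0; apply: card_run_le => i _; exact: NP.
  by rewrite /freq card0 mul0r.
by rewrite is_cvg_limn_esupE; [exact: lim_cst | exact: is_cvg_cst].
Qed.

Section DistributionFunctions.
Variables (T : Type) (d : T -> T -> R) (f : T -> T) (x y : T) (t : R).
Let close i := d (iter i f x) (iter i f y) < t.

Lemma F_up_eq1 : long_runs close -> F_up d f x y t = 1%E.
Proof. exact: limn_esup_freq. Qed.

Lemma F_up_eq0 : (forall i, ~~ close i) -> F_up d f x y t = 0%E.
Proof. exact: limn_esup_freq0. Qed.

Lemma F_low_eq0 : long_runs (fun i => ~~ close i) -> F_low d f x y t = 0%E.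
Proof. exact: limn_einf_freq. Qed.
End DistributionFunctions.
End Frequency.

Section CompatibleMetric.
Variables (R : realType) (X : discreteTopologicalType) (G : countType).
Variable d : {ptws G -> X} -> {ptws G -> X} -> R.
Hypotheses (finX : finite_set [set: X]) (d_metric : is_metric d).
Hypothesis d_compat : @metric_compatible R {ptws G -> X} d.

Lemma ptws_compact : compact [set: {ptws G -> X}].
Proof.
have := tychonoff (fun _ : G => finite_compact finX).
by congr compact; apply/seteqP; split.
Qed.

Lemma nbhs_coord (u : {ptws G -> X}) a : nbhs u [set v : {ptws G -> X} | u a = v a].
Proof.
have : nbhs u [set v : {ptws G -> X} | v a = u a].
  exact: (@proj_continuous G (fun _ => X) a u _ (discrete_set1 (u a))).
by apply: filterS => v /= ->.
Qed.

Lemma nbhs_agree_below n (u : {ptws G -> X}) :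
  nbhs u [set v : {ptws G -> X} | agree_below n u v].
Proof. exact: near_forall_pickle_lt (nbhs_coord u). Qed.

Lemma open_coord a z : open [set v : {ptws G -> X} | v a = z].
Proof. by rewrite openE => v /= <-; apply: filterS (nbhs_coord v a). Qed.

Lemma dense_coord (A : set {ptws G -> X}) a z : dense A -> exists2 x, A x & x a = z.
Proof.
move=> A_dense.
have [x [xa Ax]] := A_dense _ (ex_intro _ (fun=> z) erefl) (open_coord a z).
by exists x.
Qed.

Lemma open_agree_below n (u : {ptws G -> X}) :
  open [set v : {ptws G -> X} | agree_below n u v].
Proof.
rewrite openE => v uv; apply: filterS (nbhs_agree_below n v) => w.
exact: agree_below_trans.
Qed.

Lemma cvg_ptws (v : nat -> {ptws G -> X}) (u : {ptws G -> X}) :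
  (forall g, \forall n \near \oo, v n g = u g) -> v @ \oo --> u.
Proof.
move=> vu; apply/(@cvg_sup (G -> X) G (fun g => Topological.class
  (initial_topology (fun f : G -> X => f g))) (v @ \oo) u _) => g A /=.
rewrite (@nbhsE (initial_topology (fun f : G -> X => f g))).
move=> -[B [[C _ <-] Cu] BA]; apply: filterS (vu g) => n vng.
by apply: BA; rewrite /= vng.
Qed.

Lemma agree_below_sub_open (U : set {ptws G -> X}) u : open U -> U u ->
  exists n, [set v | agree_below n u v] `<=` U.
Proof.
move=> oU Uu; apply: contrapT => /forallNP noagree.
have /choice[v vP] : forall n, exists v : {ptws G -> X}, agree_below n u v /\ ~ U v.
  move=> n; have /existsNP[v /not_implyP[uv nUv]] := noagree n.
  by exists v.
have : v @ \oo --> u.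
  apply: cvg_ptws => g; exists (pickle g).+1 => // n /= gn.
  by apply/esym/(vP n).1.
move=> /(_ U (open_nbhs_nbhs (conj oU Uu))) [N _ /(_ N (leqnn N))].
exact: (vP N).2.
Qed.

Lemma open_dist_lt (u : {ptws G -> X}) e : open [set v | d u v < e].
Proof.
case: d_metric => _ _ _ d_tri.
apply/d_compat => v /= uv; exists (e - d u v); first by rewrite subr_gt0.
by move=> w /= vw; have := d_tri u v w; lra.
Qed.

Lemma nbhs_dist_lt (u : {ptws G -> X}) e : 0 < e -> nbhs u [set v | d u v < e].
Proof.
case: d_metric => _ d_eq0 _ _ e0; apply: open_nbhs_nbhs.
by split; [exact: open_dist_lt | rewrite /= (proj2 (d_eq0 u u))].
Qed.

Lemma agree_below_dist_lt s : 0 < s ->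
  exists n, forall u v : {ptws G -> X}, agree_below n u v -> d u v < s.
Proof.
case: d_metric => _ d_eq0 d_sym d_tri s0.
have s20 : 0 < s / 2 by rewrite divr_gt0.
have : \forall n \near \oo, [set: {ptws G -> X}] `<=`
    (fun u => forall v, agree_below n u v -> d u v < s).
  apply: (compact_near_coveringP _).1; first exact: ptws_compact.
  move=> u _.
  have [N uN] := agree_below_sub_open (open_dist_lt u (s / 2))
    (nbhs_singleton (nbhs_dist_lt u s20)).
  exists ([set v | agree_below N u v], [set n | (N <= n)%N]).
    by split => //; [exact: nbhs_agree_below | exists N].
  move=> [v n] /= [uv Nn] w vw.
  have uw : agree_below N u w.
    by apply: agree_below_trans uv _ => g gN; apply: vw; exact: leq_trans gN Nn.
  have := uN _ uv; have := uN _ uw; have := d_tri v u w; rewrite (d_sym v u) /=.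
  lra.
by move=> [N _ /(_ N (leqnn N)) HN]; exists N => u; apply: HN.
Qed.

Lemma dist_lt_agree_below n : exists2 c, 0 < c &
  forall u v : {ptws G -> X}, d u v < c -> agree_below n u v.
Proof.
case: d_metric => _ _ _ d_tri.
have : \forall c \near 0^'+, [set: {ptws G -> X}] `<=`
    (fun u => forall v, d u v < c -> agree_below n u v).
  apply: (compact_near_coveringP _).1; first exact: ptws_compact.
  move=> u _.
  have [e e0 ue] := (d_compat _).1 (open_agree_below n u) u (fun g _ => erefl).
  have e20 : 0 < e / 2 by rewrite divr_gt0.
  exists ([set v | d u v < e / 2], [set r | r < e / 2]).
    by split => //; [exact: nbhs_dist_lt | exact: nbhs_right_lt].
  move=> [v r] /= [uv re] w vw.
  have uw : d u w < e by have := d_tri u v w; lra.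
  have {}uv : agree_below n u v by apply: ue; rewrite /=; lra.
  by move=> g gn; rewrite -(uv g gn) (ue w uw g gn).
move=> cover; have [c [c0 Hc]] := filter_ex (filterI (nbhs_right_gt 0) cover).
by exists c => // u v; apply: Hc.
Qed.
End CompatibleMetric.

Section Chaos.
Variables (R : realType) (X : discreteTopologicalType) (G : countType) (phi : G -> G).
Variable d : {ptws G -> X} -> {ptws G -> X} -> R.
Hypotheses (finX : finite_set [set: X]) (d_metric : is_metric d).
Hypothesis d_compat : @metric_compatible R {ptws G -> X} d.

Lemma periodic_not_chaotic : has_periodic_point phi -> (exists x1 x2 : X, x1 <> x2) ->
  ~ dense_distributional_chaotic d (sigma_phi phi).
Proof.
move=> [a [p [p0 pa]]] [x1 [x2 x12]] [A [A_dense _ [eps _ scrambled]]].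
have [x Ax xa] := dense_coord a x1 A_dense.
have [y Ay ya] := dense_coord a x2 A_dense.
have [c c0 close] := dist_lt_agree_below finX d_metric d_compat
  (\max_(r < p) pickle (iter r phi a)).+1.
have far i : ~~ (d (iter i (sigma_phi phi) x) (iter i (sigma_phi phi) y) < c).
  apply/negP => /close; rewrite !iter_sigma_phi.
  have [r rp ira] := iter_periodic_return p0 pa i.
  move=> /(_ (iter r phi a)) /=; rewrite -!iterD ira xa ya => agree.
  by apply/x12/agree; rewrite ltnS (leq_bigmax (Ordinal rp)).
have xy : x <> y by move=> exy; apply: x12; rewrite -xa -ya exy.
have := (scrambled x y Ax Ay xy).1 c c0.
by rewrite F_up_eq0 // => -[] /eqP; rewrite eq_sym oner_eq0.
Qed.

Lemma aperiodic_chaotic : (exists x1 x2 : X, x1 <> x2) -> (exists g : G, True) ->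
  ~ has_periodic_point phi -> dense_distributional_chaotic d (sigma_phi phi).
Proof.
move=> [x1 [x2 x12]] [a0 _] aperiodic.
have [enc enc_inj] : exists enc : X -> nat, injective enc.
  have /countable_injP[enc enc_inj] := finite_set_countable finX.
  by exists enc => u v; apply: enc_inj; rewrite in_setT.
pose xp := scrambled_point phi a0 x1 x2 enc.
have [c c0 close] := dist_lt_agree_below finX d_metric d_compat (pickle a0).+1.
exists (range xp); split.
- move=> O [u Ou] oO; have [n uO] := agree_below_sub_open oO Ou.
  have [p up] := scrambled_point_prefix phi a0 x1 x2 enc u n.
  by exists (xp p); split; [exact: uO | exists p].
- move=> /countable_injP[f f_inj].
  apply: (@not_injective_to_nat (fun b => f (xp (b, [::])))) => b b' eq_f.
  have := f_inj _ _ (mem_set (imageT xp _)) (mem_set (imageT xp _)) eq_f.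
  by move=> /(scrambled_point_inj aperiodic x12 enc_inj) [].
exists c => // _ _ [p _ <-] [p' _ <-] neq; split.
- move=> s s0; have [n close_s] := agree_below_dist_lt finX d_metric d_compat s0.
  apply: F_up_eq1.
  apply: long_runsW (scrambled_point_agree_long_runs aperiodic a0 x1 x2 enc p p' n) => i.
  by rewrite !iter_sigma_phi; exact: close_s.
apply: F_low_eq0.
have pp' : p <> p' by move=> eq_p; apply: neq; rewrite eq_p.
apply: long_runsW (scrambled_point_differ_long_runs aperiodic a0 x12 enc_inj pp') => i.
by move=> differ; apply/negP => /close /(_ a0 (ltnSn _)); rewrite !iter_sigma_phi.
Qed.
End Chaos.

Theorem theorem4p4 (R : realType) (X : discreteTopologicalType) (G : countType)
    (phi : G -> G) (d : (G -> X) -> (G -> X) -> R) :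
  finite_set [set: X] ->
  (exists x1 x2 : X, x1 <> x2) ->
  (exists g : G, True) ->
  is_metric d ->
  @metric_compatible R {ptws G -> X} d ->
  @dense_distributional_chaotic R {ptws G -> X} d (sigma_phi phi) <-> ~ has_periodic_point phi.
Proof.
move=> finX two_points nonempty d_metric d_compat; split; last first.
  exact: aperiodic_chaotic.
move=> chaotic periodic.
exact: periodic_not_chaotic d_metric d_compat periodic two_points chaotic.
Qed.
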